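(* Let $d\ge3$. There exists $\varepsilon>0$ such that for every $L_0\ge1$, every $n\ge1$, every $x\in\mathcal L_n\cap F$ and every $\mathcal M\in\Lambda^F_{n,x}$, $$\sup_{z\in\mathbb Z^d}\mathbb E_z\Big[\exp\Big(\varepsilon\sum_{i\ge0}\frac{\tau_i}{L_i^2\,3^i}\Big)\Big]<\infty,$$ where, for a simple random walk $(S_k)_{k\ge0}$ started at $z$ under $\mathbb P_z$, $\tau_i=\sum_{k\ge0}\mathbf 1\{S_k\in\mathcal S_i\}$ is its total time spent in $\mathcal S_i$.
   Context: $|\cdot|$ is the $\ell^\infty$ norm on $\mathbb Z^d$. Embeddings: given $L_0\ge1$, $L_n=L_0 6^n$ and $\mathcal L_n=L_n\mathbb Z^d$. $T_{(k)}=\{1,2\}^k$ ($T_{(0)}=\{\emptyset\}$), $T_n=\bigcup_{k=0}^nT_{(k)}$; for $m\in T_{(k)}$, $m_1,m_2\in T_{(k+1)}$ are $m$ with $1$, resp. $2$, appended. A proper embedding of $T_n$ with root $x$ is a map $\mathcal M:T_n\to\mathbb Z^d$ with $\mathcal M(\emptyset)=x$, $\mathcal M(m)\in\mathcal L_{n-k}$ for $m\in T_{(k)}$, and $|\mathcal M(m_1)-\mathcal M(m)|=L_{n-k}$, $|\mathcal M(m_2)-\mathcal M(m)|=2L_{n-k}$ for $m\in T_{(k)}$, $k<n$. $F=\mathbb Z^2\times\{0\}^{d-2}$; $\Lambda^F_{n,x}$ is the set of proper embeddings of $T_n$ with root $x$ taking values in $F$. Shells: $Q(y,r)=\{w:|w-y|\le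 r\}$. Let $U_i=\bigcup_{m\in T_{(n-i)}}Q(\mathcal M(m),L_{i+1})$ for $0\le i\le n$ and $U_i=Q(x,L_{i+1})$ for $i>n$; set $\mathcal S_0=U_0$ and $\mathcal S_i=U_i\setminus U_{i-1}$ for $i\ge1$ (these form a partition of $\mathbb Z^d$). *)

From Stdlib Require Import Reals.
From HB Require Import structures.
From mathcomp Require Import all_boot all_order all_algebra.
From mathcomp Require Import Rstruct.
Set Implicit Arguments. Unset Strict Implicit. Unset Printing Implicit Defensive.
Import Order.TTheory GRing.Theory Num.Theory.

Definition pt (d : nat) := 'I_d -> int.

Definition dist {d : nat} (y w : pt d) : nat := \max_(j < d) absz (y j - w j)%R.

Definition Lk (L0 k : nat) : nat := L0 * 6 ^ k.

Definition in_lat {d : nat} (L0 k : nat) (y : pt d) : bool :=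
  [forall j : 'I_d, ((Lk L0 k)%:Z %| y j)%Z].

Definition in_F {d : nat} (y : pt d) : bool := [forall j : 'I_d, (1 < j) ==> (y j == 0%R)].

(* Tree vertices m in {1,2}^k are encoded as seq bool (false = 1, true = 2);
   m_1 = rcons m false, m_2 = rcons m true. *)
Definition proper_emb {d : nat} (L0 n : nat) (x : pt d) (M : seq bool -> pt d) : Prop :=
  M [::] = x /\
  (forall m : seq bool, size m <= n -> in_lat L0 (n - size m) (M m)) /\
  (forall m : seq bool, size m < n ->
      dist (M (rcons m false)) (M m) = Lk L0 (n - size m) /\
      dist (M (rcons m true)) (M m) = 2 * Lk L0 (n - size m)).

Definition in_LambdaF {d : nat} (L0 n : nat) (x : pt d) (M : seq bool -> pt d) : Prop :=
  proper_emb L0 n x M /\ (forall m : seq bool, size m <= n -> in_F (M m)).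

Definition in_U {d : nat} (L0 n : nat) (x : pt d) (M : seq bool -> pt d) (i : nat) (y : pt d)
  : bool :=
  if i <= n then [exists t : (n - i).-tuple bool, dist y (M (tval t)) <= Lk L0 i.+1]
  else dist y x <= Lk L0 i.+1.

Definition in_shell {d : nat} (L0 n : nat) (x : pt d) (M : seq bool -> pt d) (i : nat) (y : pt d)
  : bool :=
  if i is i'.+1 then in_U L0 n x M i y && ~~ in_U L0 n x M i' y
  else in_U L0 n x M 0 y.

Definition step_vec {d : nat} (s : 'I_d * bool) : pt d :=
  fun j => if j == s.1 then (if s.2 then 1%R else (-1)%R) else 0%R.

Definition pos {d : nat} (z : pt d) (s : seq ('I_d * bool)) (k : nat) : pt d :=
  fun j => (z j + \sum_(st <- take k s) step_vec st j)%R.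

Definition tau {d : nat} (L0 n : nat) (x : pt d) (M : seq bool -> pt d) (i : nat)
  (z : pt d) (N : nat) (s : seq ('I_d * bool)) : nat :=
  count (fun k => in_shell L0 n x M i (pos z s k)) (iota 0 N).

(* E_z of G(S_0, ..., S_{N-1}) for simple random walk: uniform average over the
   (2d)^N step sequences of length N. *)
Definition srw_E (d : nat) (N : nat) (G : seq ('I_d * bool) -> R) : R :=
  (\sum_(s : N.-tuple ('I_d * bool)) G (tval s) / ((2 * d) ^ N)%:R)%R.

Definition trunc_functional {d : nat} (L0 n : nat) (x : pt d) (M : seq bool -> pt d)
  (eps : R) (z : pt d) (N I : nat) (s : seq ('I_d * bool)) : R :=
  exp (eps * \sum_(i < I) (tau L0 n x M i z N s)%:R / ((Lk L0 i) ^ 2 * 3 ^ i)%:R)%R.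

From Pilot Require Import Defs.
From Stdlib Require Import Reals.
From HB Require Import structures.
From mathcomp Require Import all_boot all_order all_algebra.
From mathcomp Require Import Rstruct.
Import Order.TTheory GRing.Theory Num.Theory.
From Stdlib Require Import FunctionalExtensionality.
From mathcomp Require Import ring lra zify.

Set Implicit Arguments.
Unset Strict Implicit.
Unset Printing Implicit Defensive.

(* The exponential moment is controlled by a Lyapunov function. For a centre [c] and a
   scale [L], [psi L c y ~ (L / |y - c|) ^ (1/2)] is superharmonic for the simple random
   walk when [d >= 3], and decreases in one step by [kappa d / L ^ 2] on the ball of radius
   [L] around [c]. Summing it over the [2 ^ (n - i)] leaves of the embedded tree, at scale
   [L_(i+1)], gives a function [G_i] that stays bounded uniformly in [n]: two siblings are
   [L_j] apart, so at most one of them is close to a given point, and the subtrees far from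
   it contribute a geometric series of ratio [2 / sqrt 6]. As [G_i] drifts down by
   [kappa d / L_(i+1) ^ 2] on [U_i], which contains [S_i], the bounded function
   [f = sum_i 36 / (kappa d 3 ^ i) G_i] satisfies [V <= f - P f] for
   [V = sum_i 1_(S_i) / (L_i ^ 2 3 ^ i)]. For small [eps], [g = 1 + 4 eps f] then satisfies
   [exp (eps V) P g <= g], and induction on the time horizon bounds the exponential moment
   of the occupation times by [sup g <= 2]. *)

Local Open Scope ring_scope.
Bind Scope ring_scope with R.

(* [Reals] exports other constants with these names. *)
Local Notation dist := Defs.dist.
Local Notation pos := Defs.pos.

Definition root4 (s : R) : R := Num.sqrt (Num.sqrt s).

Lemma root4_ge0 s : 0 <= root4 s.
Proof. exact: sqrtr_ge0. Qed.

Lemma root4_gt0 s : 0 < s -> 0 < root4 s.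
Proof. by move=> s_gt0; rewrite /root4 !sqrtr_gt0. Qed.

Lemma root4K s : 0 <= s -> root4 s ^+ 4 = s.
Proof.
by move=> s_ge0; rewrite /root4 (exprM _ 2 2) !sqr_sqrtr ?sqrtr_ge0.
Qed.

Lemma ler_root4 s1 s2 : 0 <= s2 -> s1 <= s2 -> root4 s1 <= root4 s2.
Proof. by move=> s2_ge0 le_s; rewrite /root4 ler_sqrt ?sqrtr_ge0 // ler_sqrt. Qed.

Lemma root4M a b : 0 <= a -> root4 (a * b) = root4 a * root4 b.
Proof. by move=> a_ge0; rewrite /root4 sqrtrM // sqrtrM // sqrtr_ge0. Qed.

Lemma root4_sqr a : 0 <= a -> root4 (a ^+ 2) = Num.sqrt a.
Proof. by move=> a_ge0; rewrite /root4 sqrtr_sqr ger0_norm. Qed.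

Lemma root4_expr4 a : 0 <= a -> root4 (a ^+ 4) = a.
Proof. by move=> a_ge0; rewrite (exprM a 2 2) root4_sqr ?sqr_ge0 // sqrtr_sqr ger0_norm. Qed.

Lemma geometric_sum_le (q : R) k : 0 <= q < 1 -> \sum_(i < k) q ^+ i <= (1 - q)^-1.
Proof.
case/andP=> q_ge0 q_lt1; have q1_gt0 : 0 < 1 - q by rewrite subr_gt0.
have -> : \sum_(i < k) q ^+ i = (1 - q)^-1 * (1 - q ^+ k).
  by rewrite -[1 - q ^+ k]opprB subrX1 -mulNr opprB mulKf ?lt0r_neq0.
by apply: ler_piMr; [rewrite invr_ge0 ltW | rewrite gerBl exprn_ge0].
Qed.

(* Second-order Taylor bound for [t ^ (-1/4)] at [t = 1], written in [x = t ^ (1/4)]. *)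
Lemma inv_taylor_unit (x : R) : 99/100 <= x ->
  x^-1 <= 1 - (x ^+ 4 - 1) / 4 + 21/128 * (x ^+ 4 - 1) ^+ 2.
Proof.
move=> x_ge.
have remainder : (x ^+ 3 + 2 * x ^+ 2 + 3 * x + 4) / 4
                   <= 21/128 * x * (x ^+ 3 + x ^+ 2 + x + 1) ^+ 2.
  set h := x - 99/100; have -> : x = 99/100 + h by rewrite /h addrC subrK.
  have h_ge0 : 0 <= h by rewrite /h subr_ge0.
  have := exprn_ge0 2 h_ge0; have := exprn_ge0 3 h_ge0; have := exprn_ge0 4 h_ge0.
  have := exprn_ge0 5 h_ge0; have := exprn_ge0 6 h_ge0; have := exprn_ge0 7 h_ge0.
  by clearbody h; lra.
have x_gt0 : 0 < x by lra.
rewrite -subr_ge0.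
have -> : 1 - (x ^+ 4 - 1) / 4 + 21/128 * (x ^+ 4 - 1) ^+ 2 - x^-1
  = x^-1 * ((x - 1) ^+ 2 * (21/128 * x * (x ^+ 3 + x ^+ 2 + x + 1) ^+ 2
                           - (x ^+ 3 + 2 * x ^+ 2 + 3 * x + 4) / 4)).
  by field; rewrite lt0r_neq0.
apply: mulr_ge0; first by rewrite invr_ge0 ltW.
by apply: mulr_ge0; rewrite ?sqr_ge0 ?subr_ge0.
Qed.

Lemma inv_root4_taylor (s u : R) : 0 < s -> - s / 100 <= u ->
  (root4 (s + u))^-1 <=
    (root4 s)^-1 - u * (root4 s)^-1 ^+ 5 / 4 + 21/128 * u ^+ 2 * (root4 s)^-1 ^+ 9.
Proof.
move=> s_gt0 u_ge.
have su_gt0 : 0 < s + u by lra.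
set v := root4 s; set w := root4 (s + u); set t := u / s.
have t_ge : -1/100 <= t by rewrite ler_pdivlMr //; lra.
have v_gt0 : 0 < v by exact: root4_gt0.
have w_gt0 : 0 < w by exact: root4_gt0.
have u_eq : u = t * v ^+ 4 by rewrite root4K ?ltW // divfK ?lt0r_neq0.
have x4 : (w / v) ^+ 4 = 1 + t.
  by rewrite exprMn exprVn !root4K ?ltW // /t; field; rewrite lt0r_neq0.
have x_ge : 99/100 <= w / v.
  rewrite leNgt; apply/negP => x_lt.
  have : (w / v) ^+ 4 < (99/100) ^+ 4 by rewrite ltrXn2r // divr_ge0 ?ltW.
  by rewrite x4 !exprS expr0; lra.
have := inv_taylor_unit x_ge; rewrite x4 [1 + t]addrC addrK => taylor.
have -> : w^-1 = v^-1 * (w / v)^-1 by rewrite invf_div mulrA mulVf ?mul1r ?lt0r_neq0.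
have -> : v^-1 - u * v^-1 ^+ 5 / 4 + 21/128 * u ^+ 2 * v^-1 ^+ 9
          = v^-1 * (1 - t / 4 + 21/128 * t ^+ 2).
  by rewrite u_eq; field; rewrite lt0r_neq0.
by apply: ler_wpM2l; first by rewrite invr_ge0 ltW.
Qed.

Lemma inv_root4_pair (s a : R) : 10000 + a ^+ 2 <= s ->
  (root4 (s + (1 + 2 * a)))^-1 + (root4 (s + (1 - 2 * a)))^-1 <=
    2 * (root4 s)^-1 - (root4 s)^-1 ^+ 5 / 2 + 21/64 * (root4 s)^-1 ^+ 9 * (1 + 4 * a ^+ 2).
Proof.
move=> s_ge; have s_gt0 : 0 < s by have := sqr_ge0 a; lra.
have plus_ge : - s / 100 <= 1 + 2 * a by have := sqr_ge0 (a + 100); lra.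
have minus_ge : - s / 100 <= 1 - 2 * a by have := sqr_ge0 (a - 100); lra.
have := inv_root4_taylor s_gt0 plus_ge; have := inv_root4_taylor s_gt0 minus_ge.
lra.
Qed.

(* [A + \sum_k a k ^+ 2 + (1 +- 2 * a j)] is [A + |a +- e_j| ^ 2]. *)
Lemma inv_root4_nbr_sum d (a : 'I_d -> R) (A : R) : (3 <= d)%N -> 10000 <= A ->
  \sum_(j < d) ((root4 (A + \sum_k a k ^+ 2 + (1 + 2 * a j)))^-1
              + (root4 (A + \sum_k a k ^+ 2 + (1 - 2 * a j)))^-1)
  <= 2 * d%:R * ((root4 (A + \sum_k a k ^+ 2))^-1
                 - (root4 (A + \sum_k a k ^+ 2))^-1 ^+ 5 / 32).
Proof.
move=> d_ge3 A_ge; set t := \sum_k a k ^+ 2.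
have a_le j : a j ^+ 2 <= t.
  by rewrite /t (bigD1 j) //= lerDl sumr_ge0 // => k _; exact: sqr_ge0.
have t_ge0 : 0 <= t by rewrite sumr_ge0 // => k _; exact: sqr_ge0.
set s := A + t; set iv := (root4 s)^-1.
have s_ge j : 10000 + a j ^+ 2 <= s by have := a_le j; rewrite /s; lra.
apply: le_trans (ler_sum _ (fun j _ => inv_root4_pair (s_ge j))) _.
rewrite -/iv (eq_bigr (fun j => (2 * iv - iv ^+ 5 / 2 + 21/64 * iv ^+ 9)
                                 + 21/16 * iv ^+ 9 * a j ^+ 2)); last by move=> j _; field.
rewrite big_split /= sumr_const card_ord -mulr_sumr -/t -[_ *+ d]mulr_natl.
have s_gt0 : 0 < s by rewrite /s; lra.
have iv5 : iv ^+ 5 = s * iv ^+ 9.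
  have v_neq0 : root4 s != 0 by rewrite lt0r_neq0 ?root4_gt0.
  by rewrite /iv; move: (root4 s) v_neq0 (root4K (ltW s_gt0)) => v v_neq0 <-; field.
have iv9_ge0 : 0 <= iv ^+ 9 by rewrite exprn_ge0 // invr_ge0 root4_ge0.
have key : 21/64 * d%:R + 21/16 * t <= 7/16 * (d%:R * s).
  have d_ge : 3 <= d%:R :> R by rewrite (ler_nat R 3).
  have : 0 <= (d%:R - 3) * (s - 10000) by rewrite mulr_ge0 // subr_ge0 /s; lra.
  by rewrite /s; lra.
move: key; rewrite -subr_ge0 => /(mulr_ge0 iv9_ge0); rewrite iv5; lra.
Qed.

Lemma dist_triangle d (a b c : pt d) : (dist a c <= dist a b + dist b c)%N.
Proof.
apply/bigmax_leqP => j _; apply: leq_trans (leqD_dist (a j) (b j) (c j)) _.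
by apply: leq_add; apply: (leq_bigmax j).
Qed.

Lemma distC d (a b : pt d) : dist a b = dist b a.
Proof. by apply: eq_bigr => j _; rewrite distnC. Qed.

Definition distR {d : nat} (y c : pt d) : R := (dist y c)%:R.

Definition nbr {d : nat} (y : pt d) (st : 'I_d * bool) : pt d :=
  fun j => y j + step_vec st j.

Definition euclid2 {d : nat} (y c : pt d) : R := \sum_j ((y j - c j)%:~R) ^+ 2.

(* A smoothing of [(L / |y - c|) ^ (1/2)] at scale [100 L]; the exponent [-1/2 > 2 - d]
   makes it superharmonic for [d >= 3]. *)
Definition psi {d : nat} (L : R) (c y : pt d) : R :=
  Num.sqrt L / root4 (10000 * L ^+ 2 + euclid2 y c).

Definition stepE {d : nat} (G : pt d -> R) (y : pt d) : R :=
  (\sum_st G (nbr y st)) / (2 * d)%:R.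

Lemma euclid2_ge0 d (y c : pt d) : 0 <= euclid2 y c.
Proof. by rewrite sumr_ge0 // => j _; exact: sqr_ge0. Qed.

Lemma sqr_dist_le_euclid2 d (y c : pt d) : distR y c ^+ 2 <= euclid2 y c.
Proof.
rewrite /distR.
apply: (big_ind2 (fun m s => (m%:R : R) ^+ 2 <= s)) => [|m1 s1 m2 s2 le1 le2|j _].
- by rewrite expr0n.
- have := sqr_ge0 (m1%:R : R); have := sqr_ge0 (m2%:R : R).
  by case: leqP; lra.
- by rewrite natr_absz intr_norm -normrX ger0_norm ?sqr_ge0.
Qed.

Lemma euclid2_le d (y c : pt d) (L : R) : distR y c <= L -> euclid2 y c <= d%:R * L ^+ 2.
Proof.
move=> dist_le; have L_ge0 : 0 <= L by apply: le_trans dist_le.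
have -> : d%:R * L ^+ 2 = \sum_(j < d) L ^+ 2 by rewrite sumr_const card_ord mulr_natl.
apply: ler_sum => j _.
rewrite -[_ ^+ 2]ger0_norm ?sqr_ge0 // normrX -intr_norm -natr_absz.
by rewrite lerXn2r ?nnegrE ?ler0n //; apply: le_trans dist_le; rewrite ler_nat (leq_bigmax j).
Qed.

Lemma euclid2_nbr d (y c : pt d) j b :
  euclid2 (nbr y (j, b)) c =
    euclid2 y c + (1 + 2 * (if b then (y j - c j)%:~R else - (y j - c j)%:~R)).
Proof.
rewrite /euclid2 (bigD1 j) //= [in RHS](bigD1 j) //=.
rewrite (eq_bigr (fun k => ((y k - c k)%:~R : R) ^+ 2)); last first.
  by move=> k k_neq_j; rewrite /nbr /step_vec /= (negbTE k_neq_j) addr0.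
rewrite /nbr /step_vec /= eqxx addrAC intrD.
by case: b; rewrite ?rmorphN /=; ring.
Qed.

Lemma stepE_psi_le d (L : R) (c y : pt d) : (3 <= d)%N -> 1 <= L ->
  stepE (psi L c) y <=
    psi L c y - Num.sqrt L * (root4 (10000 * L ^+ 2 + euclid2 y c))^-1 ^+ 5 / 32.
Proof.
move=> d_ge3 L_ge1.
have A_ge : 10000 <= 10000 * L ^+ 2 by rewrite ler_peMr ?expr_ge1 //; lra.
have := inv_root4_nbr_sum (fun j => (y j - c j)%:~R) d_ge3 A_ge.
rewrite -/(euclid2 y c); set iv := (root4 _)^-1; set S := \sum_(j < d) _ => S_le.
have sum_psi : \sum_st psi L c (nbr y st) = Num.sqrt L * S.
  rewrite (eq_bigr (fun st => psi L c (nbr y (st.1, st.2)))); last by case.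
  rewrite -(pair_bigA _ (fun j b => psi L c (nbr y (j, b)))) mulr_sumr.
  by apply: eq_bigr => j _; rewrite big_bool /psi !euclid2_nbr !addrA mulrDr mulrN.
have d2_gt0 : 0 < (2 * d)%:R :> R by rewrite ltr0n muln_gt0 /= (leq_trans _ d_ge3).
have -> : psi L c y - Num.sqrt L * iv ^+ 5 / 32 = Num.sqrt L * (iv - iv ^+ 5 / 32).
  by rewrite /psi /iv; ring.
rewrite /stepE sum_psi -mulrA.
apply: ler_wpM2l; first exact: sqrtr_ge0.
by rewrite ler_pdivrMr // mulrC natrM.
Qed.

Lemma psi_superharmonic d (L : R) (c y : pt d) : (3 <= d)%N -> 1 <= L ->
  stepE (psi L c) y <= psi L c y.
Proof.
move=> d_ge3 L_ge1; apply: le_trans (stepE_psi_le c y d_ge3 L_ge1) _.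
rewrite gerBl !mulr_ge0 ?sqrtr_ge0 ?exprn_ge0 ?invr_ge0 ?root4_ge0 //; lra.
Qed.

Lemma psi_ge0 d (L : R) (c y : pt d) : 0 <= psi L c y.
Proof. by rewrite divr_ge0 ?sqrtr_ge0 ?root4_ge0. Qed.

Lemma psi_le_tenth d (L : R) (c y : pt d) : 0 < L -> psi L c y <= 1/10.
Proof.
move=> L_gt0; have sL_gt0 : 0 < Num.sqrt L by rewrite sqrtr_gt0.
have root_ge : 10 * Num.sqrt L <= root4 (10000 * L ^+ 2 + euclid2 y c).
  have A_eq : (10 * Num.sqrt L) ^+ 4 = 10000 * L ^+ 2.
    by rewrite exprMn (exprM (Num.sqrt L) 2 2) sqr_sqrtr ?ltW // !exprS expr0; lra.
  have tenL_ge0 : 0 <= 10 * Num.sqrt L by lra.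
  rewrite -[leLHS](root4_expr4 tenL_ge0).
  rewrite A_eq; apply: ler_root4; last by rewrite lerDl euclid2_ge0.
  by rewrite addr_ge0 ?euclid2_ge0 // -A_eq exprn_ge0.
by rewrite ler_pdivrMr; lra.
Qed.

Lemma psi_le_far d (L D : R) (c y : pt d) : 0 < L -> 0 < D -> D <= distR y c ->
  psi L c y <= Num.sqrt (L / D).
Proof.
move=> L_gt0 D_gt0 D_le; have sD_gt0 : 0 < Num.sqrt D by rewrite sqrtr_gt0.
have root_ge : Num.sqrt D <= root4 (10000 * L ^+ 2 + euclid2 y c).
  have A_ge0 : 0 <= 10000 * L ^+ 2 by rewrite mulr_ge0 ?sqr_ge0 //; lra.
  rewrite -(root4_sqr (ltW D_gt0)); apply: ler_root4; first by rewrite addr_ge0 ?euclid2_ge0.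
  have := sqr_dist_le_euclid2 y c.
  have : D ^+ 2 <= distR y c ^+ 2 by apply: lerXn2r => //; rewrite nnegrE ?ler0n // ltW.
  lra.
rewrite /psi sqrtrM ?(ltW L_gt0) // sqrtrV ?(ltW D_gt0) //.
apply: ler_wpM2l; first exact: sqrtr_ge0.
by rewrite lef_pV2 ?posrE // (lt_le_trans sD_gt0 root_ge).
Qed.

Definition kappa (d : nat) : R := (root4 (10000 + d%:R))^-1 ^+ 5 / 32.

Lemma kappa_gt0 d : 0 < kappa d.
Proof.
have : 0 < 10000 + d%:R :> R by have := ler0n R d; lra.
by move=> /root4_gt0 Q_gt0; apply: divr_gt0; [rewrite exprn_gt0 // invr_gt0 | lra].
Qed.

Lemma psi_drift d (L : R) (c y : pt d) : (3 <= d)%N -> 1 <= L -> distR y c <= L ->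
  kappa d / L ^+ 2 <= psi L c y - stepE (psi L c) y.
Proof.
move=> d_ge3 L_ge1 dist_le.
have := stepE_psi_le c y d_ge3 L_ge1; set v := root4 _; set P := stepE _ _ => drift.
have {}drift : Num.sqrt L * v^-1 ^+ 5 / 32 <= psi L c y - P by lra.
apply: le_trans drift.
have L_gt0 : 0 < L by lra.
set s := Num.sqrt L; have s_gt0 : 0 < s by rewrite sqrtr_gt0.
set Q := root4 (10000 + d%:R).
have Q_gt0 : 0 < Q by apply: root4_gt0; have := ler0n R d; lra.
have v_gt0 : 0 < v.
  by apply: root4_gt0; have := euclid2_ge0 y c; have := exprn_ege1 2 L_ge1; lra.
have v_le : v <= Q * s.
  have dA_ge0 : 0 <= 10000 + d%:R :> R by have := ler0n R d; lra.
  rewrite /Q /s -(root4_sqr (ltW L_gt0)) -root4M //.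
  apply: ler_root4; first by rewrite mulr_ge0 ?sqr_ge0.
  by rewrite [(10000 + _) * _]mulrDl lerD2l; exact: euclid2_le.
have -> : kappa d / L ^+ 2 = s * (Q * s)^-1 ^+ 5 / 32.
  rewrite /kappa -/Q -(sqr_sqrtr (ltW L_gt0)) -/s; field.
  by rewrite !lt0r_neq0.
have Qs_gt0 : 0 < Q * s by rewrite mulr_gt0.
apply: ler_wpM2r; first by lra.
apply: ler_wpM2l; first exact: ltW.
apply: lerXn2r; rewrite ?nnegrE ?invr_ge0 ?(ltW Qs_gt0) ?(ltW v_gt0) //.
by rewrite lef_pV2 ?posrE.
Qed.

Fixpoint tree_level (k : nat) : seq (seq bool) :=
  if k is k'.+1 then [seq false :: r | r <- tree_level k'] ++ [seq true :: r | r <- tree_level k']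
  else [:: [::]].

Lemma mem_tree_level (r : seq bool) : r \in tree_level (size r).
Proof.
elim: r => [|b r IH] //=; rewrite mem_cat.
by case: b; apply/orP; [right|left]; apply/mapP; exists r.
Qed.

Definition tree_psi {d : nat} (L : R) (M : seq bool -> pt d) (m : seq bool) (k : nat)
  : pt d -> R :=
  fun y => \sum_(r <- tree_level k) psi L (M (m ++ r)) y.

Lemma tree_psi0 d L (M : seq bool -> pt d) m y : tree_psi L M m 0 y = psi L (M m) y.
Proof. by rewrite /tree_psi /= big_seq1 cats0. Qed.

Lemma tree_psiS d L (M : seq bool -> pt d) m k y :
  tree_psi L M m k.+1 y = tree_psi L M (rcons m false) k y + tree_psi L M (rcons m true) k y.
Proof.
rewrite /tree_psi /= big_cat !big_map.
by congr (_ + _); apply: eq_bigr => r _; rewrite cat_rcons.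
Qed.

Definition emb_spacing {d : nat} (L0 n : nat) (M : seq bool -> pt d) : Prop :=
  forall m : seq bool, (size m < n)%N ->
    dist (M (rcons m false)) (M m) = Lk L0 (n - size m) /\
    dist (M (rcons m true)) (M m) = 2 * Lk L0 (n - size m).

Definition Lr (L0 j : nat) : R := (Lk L0 j)%:R.

Lemma Lr_ge1 L0 j : (0 < L0)%N -> 1 <= Lr L0 j.
Proof. by move=> L0_gt0; rewrite /Lr (ler_nat R 1) muln_gt0 L0_gt0 expn_gt0. Qed.

Lemma LrS L0 j : Lr L0 j.+1 = 6 * Lr L0 j.
Proof. by rewrite /Lr /Lk expnS mulnCA natrM. Qed.

Definition gamma : R := 2 / Num.sqrt 6.

Lemma gamma_gt0 : 0 < gamma.
Proof. by rewrite divr_gt0 ?sqrtr_gt0 //; lra. Qed.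

Lemma gamma_lt1 : gamma < 1.
Proof.
have sqrt6_gt2 : 2 < Num.sqrt (6 : R).
  have -> : 2 = Num.sqrt (2 ^+ 2) :> R by rewrite sqrtr_sqr ger0_norm //; lra.
  by rewrite ltr_sqrt ?expr2; lra.
by rewrite ltr_pdivrMr; lra.
Qed.

Section TreePotential.

Variables (d L0 n : nat) (M : seq bool -> pt d).
Hypotheses (L0_gt0 : (0 < L0)%N) (spacing : emb_spacing L0 n M).

Lemma dist_child m b y : (size m < n)%N ->
  distR y (M m) <= distR y (M (rcons m b)) + 2 * Lr L0 (n - size m).
Proof.
move=> m_lt; have [dist_l dist_r] := spacing m_lt.
rewrite /Lr /distR -natrM -natrD ler_nat.
have := dist_triangle y (M (rcons m b)) (M m).
by case: b; rewrite ?dist_l ?dist_r; lia.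
Qed.

Lemma dist_children m y : (size m < n)%N ->
  Lr L0 (n - size m) <= distR y (M (rcons m false)) + distR y (M (rcons m true)).
Proof.
move=> m_lt; have [dist_l dist_r] := spacing m_lt; rewrite /Lr /distR -natrD ler_nat.
have := dist_triangle (M (rcons m true)) (M (rcons m false)) (M m).
have := dist_triangle (M (rcons m true)) y (M (rcons m false)).
by rewrite (distC (M (rcons m true)) y) dist_l dist_r; lia.
Qed.

(* The distance hypothesis passes to the children of [m]: they lie within [2 L_j] of [M m],
   and [2 L_j + 12/5 L_(j-1) = 12/5 L_j]. *)
Lemma tree_psi_far k m y (D : R) : (size m + k <= n)%N -> 0 < D ->
  D + 12/5 * Lr L0 (n - size m) <= distR y (M m) ->
  tree_psi (6 * Lr L0 (n - size m - k)) M m k y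
    <= gamma ^+ k * Num.sqrt (6 * Lr L0 (n - size m) / D).
Proof.
elim: k m => [|k IH] m mk_le D_gt0 dist_ge.
  have := Lr_ge1 (n - size m) L0_gt0; rewrite tree_psi0 expr0 mul1r subn0 => Lj_ge1.
  by apply: psi_le_far => //; lra.
have m_lt : (size m < n)%N by lia.
have Lj_eq : Lr L0 (n - size m) = 6 * Lr L0 (n - size m).-1.
  by rewrite -LrS prednK ?subn_gt0.
have child b : tree_psi (6 * Lr L0 (n - size m - k.+1)) M (rcons m b) k y
               <= gamma ^+ k * Num.sqrt (Lr L0 (n - size m) / D).
  have e1 : (n - (size m).+1 - k = n - size m - k.+1)%N by lia.
  have e2 : (n - (size m).+1 = (n - size m).-1)%N by lia.
  rewrite Lj_eq; have := IH (rcons m b); rewrite size_rcons e1 e2; apply=> //; first by lia.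
  by have := dist_child b y m_lt; move: dist_ge; rewrite Lj_eq; lra.
rewrite tree_psiS; apply: le_trans (lerD (child false) (child true)) _.
have sqrt6_gt0 : 0 < Num.sqrt 6 :> R by rewrite sqrtr_gt0; lra.
have -> : Num.sqrt (6 * Lr L0 (n - size m) / D)
          = Num.sqrt 6 * Num.sqrt (Lr L0 (n - size m) / D).
  by rewrite -mulrA sqrtrM //; lra.
set X := Num.sqrt (_ / D).
suff -> : gamma ^+ k.+1 * (Num.sqrt 6 * X) = gamma ^+ k * X + gamma ^+ k * X by [].
by rewrite exprS /gamma; field; rewrite lt0r_neq0.
Qed.

Lemma tree_psi_bounded k m y : (size m + k <= n)%N ->
  tree_psi (6 * Lr L0 (n - size m - k)) M m k y <= 1 + Num.sqrt 10 * \sum_(i < k) gamma ^+ i.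
Proof.
elim: k m => [|k IH] m mk_le.
  have := Lr_ge1 (n - size m) L0_gt0; rewrite tree_psi0 big_ord0 mulr0 addr0 subn0 => Lj_ge1.
  by apply: le_trans (psi_le_tenth _ _ _) _; lra.
have m_lt : (size m < n)%N by lia.
have Lj_eq : Lr L0 (n - size m) = 6 * Lr L0 (n - size m).-1.
  by rewrite -LrS prednK ?subn_gt0.
have Lj'_ge1 := Lr_ge1 (n - size m).-1 L0_gt0.
have e1 : (n - (size m).+1 - k = n - size m - k.+1)%N by lia.
have e2 : (n - (size m).+1 = (n - size m).-1)%N by lia.
have near b : tree_psi (6 * Lr L0 (n - size m - k.+1)) M (rcons m b) k y
              <= 1 + Num.sqrt 10 * \sum_(i < k) gamma ^+ i.
  by have := IH (rcons m b); rewrite size_rcons e1; apply; lia.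
have far b : Lr L0 (n - size m) <= 2 * distR y (M (rcons m b)) ->
    tree_psi (6 * Lr L0 (n - size m - k.+1)) M (rcons m b) k y <= gamma ^+ k * Num.sqrt 10.
  move=> dist_ge.
  have := tree_psi_far (k := k) (m := rcons m b) (y := y) (D := Lr L0 (n - size m) / 10).
  have ratio : 6 * Lr L0 (n - size m).-1 / (Lr L0 (n - size m) / 10) = 10.
    by rewrite Lj_eq; field; exact: lt0r_neq0 (lt_le_trans ltr01 Lj'_ge1).
  rewrite size_rcons e1 e2 ratio; apply; [lia | lra | lra].
(* One of two siblings, which are [L_j] apart, is at distance at least [L_j / 2] from [y]. *)
rewrite tree_psiS big_ord_recr /= mulrDr.
have := dist_children y m_lt.
have := near false; have := near true; have := far false; have := far true.
case: (lerP (Lr L0 (n - size m)) (2 * distR y (M (rcons m false)))); lra.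
Qed.

End TreePotential.

Lemma stepE_sum d (A : Type) (r : seq A) (F : A -> pt d -> R) y :
  stepE (fun w => \sum_(a <- r) F a w) y = \sum_(a <- r) stepE (F a) y.
Proof. by rewrite /stepE exchange_big /= mulr_suml. Qed.

Lemma stepE_scale d (c : R) (F : pt d -> R) y : stepE (fun w => c * F w) y = c * stepE F y.
Proof. by rewrite /stepE -mulr_sumr mulrA. Qed.

Lemma stepE_affine d (a b : R) (F : pt d -> R) y : (0 < d)%N ->
  stepE (fun w => a + b * F w) y = a + b * stepE F y.
Proof.
move=> d_gt0; rewrite /stepE big_split /= sumr_const card_prod card_ord card_bool.
by rewrite -mulr_sumr mulnC -mulr_natr; field; rewrite pnatr_eq0 -lt0n.
Qed.

Lemma stepE_ge0 d (F : pt d -> R) y : (forall w, 0 <= F w) -> 0 <= stepE F y.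
Proof. by move=> F_ge0; rewrite divr_ge0 ?ler0n ?sumr_ge0. Qed.

Definition tree_bound : R := 1 + Num.sqrt 10 / (1 - gamma).

Lemma tree_bound_ge1 : 1 <= tree_bound.
Proof. by rewrite lerDl divr_ge0 ?sqrtr_ge0 // subr_ge0 ltW ?gamma_lt1. Qed.

Section ShellPotential.

Variables (d L0 n : nat) (x : pt d) (M : seq bool -> pt d).
Hypotheses (d_ge3 : (3 <= d)%N) (L0_gt0 : (0 < L0)%N) (spacing : emb_spacing L0 n M).

Definition shell_potential (i : nat) : pt d -> R :=
  if (i <= n)%N then tree_psi (Lr L0 i.+1) M [::] (n - i) else psi (Lr L0 i.+1) x.

Lemma shell_potential_ge0 i y : 0 <= shell_potential i y.
Proof.
rewrite /shell_potential; case: ifP => _; last exact: psi_ge0.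
by rewrite sumr_ge0 // => r _; exact: psi_ge0.
Qed.

Lemma shell_potential_le i y : shell_potential i y <= tree_bound.
Proof.
rewrite /shell_potential; case: ifP => i_le.
  have := tree_psi_bounded L0_gt0 spacing (m := [::]) (k := n - i) y.
  rewrite subn0 subKn // -LrS => /(_ (leq_subr _ _)) /le_trans; apply.
  rewrite lerD2l ler_wpM2l ?sqrtr_ge0 //.
  by apply: geometric_sum_le; rewrite ltW ?gamma_gt0 ?gamma_lt1.
have := Lr_ge1 i.+1 L0_gt0 => L_ge1.
by apply: le_trans (psi_le_tenth _ _ _) _; have := tree_bound_ge1; lra.
Qed.

Lemma shell_potential_superharmonic i y :
  stepE (shell_potential i) y <= shell_potential i y.
Proof.
have L_ge1 := Lr_ge1 i.+1 L0_gt0.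
rewrite /shell_potential; case: ifP => _; last exact: psi_superharmonic.
by rewrite /tree_psi stepE_sum; apply: ler_sum => r _; exact: psi_superharmonic.
Qed.

Lemma shell_potential_drift i y : in_U L0 n x M i y ->
  kappa d / Lr L0 i.+1 ^+ 2 <= shell_potential i y - stepE (shell_potential i) y.
Proof.
have L_ge1 := Lr_ge1 i.+1 L0_gt0.
rewrite /in_U /shell_potential; case: ifP => i_le; last first.
  by move=> dist_le; apply: psi_drift; rewrite // /distR /Lr ler_nat.
case/existsP => t dist_le.
have t_in : tval t \in tree_level (n - i) by rewrite -{2}(size_tuple t) mem_tree_level.
rewrite /tree_psi stepE_sum -sumrB (big_rem _ t_in) /=.
rewrite -[leLHS]addr0; apply: lerD.
  by apply: psi_drift; rewrite // /distR /Lr ler_nat.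
by rewrite sumr_ge0 // => r _; rewrite subr_ge0 psi_superharmonic.
Qed.

End ShellPotential.

Lemma exp_le_1_2x (a : R) : 0 <= a -> a <= 1/2 -> exp a <= 1 + 2 * a.
Proof.
move=> a_ge0 a_le.
have exp_gt0 : 0 < exp a by apply/RltP; exact: exp_pos.
have : 1 - a <= (exp a)^-1 by move/RleP: (exp_ineq1_le (- a)); rewrite exp_Ropp RinvE.
rewrite -(ler_pM2r exp_gt0) mulVf ?lt0r_neq0 // => le1.
have : 0 <= a * (1 - 2 * a) by rewrite mulr_ge0 //; lra.
have : 0 <= (1 - a) * (1 + 2 * a - exp a) -> exp a <= 1 + 2 * a.
  by rewrite pmulr_rge0 ?subr_ge0 //; lra.
by move=> /[swap] ?; apply; lra.
Qed.

Lemma exp_drift_le (a p q : R) : 0 <= a <= 1/2 -> 0 <= p -> p + 4 * a <= q -> q <= 1 ->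
  exp a * (1 + p) <= 1 + q.
Proof.
case/andP=> a_ge0 a_le p_ge0 pq q_le1.
apply: le_trans (_ : (1 + 2 * a) * (1 + p) <= _).
  by apply: ler_wpM2r; [lra | exact: exp_le_1_2x].
have : 0 <= a * (1 - q) by rewrite mulr_ge0 //; lra.
have : (1 + 2 * a) * (1 + p) <= (1 + 2 * a) * (1 + q - 4 * a) by apply: ler_wpM2l; lra.
have := sqr_ge0 a; nra.
Qed.

Lemma pos0 d (z : pt d) s : pos z s 0 = z.
Proof. by apply: functional_extensionality => j; rewrite /pos take0 big_nil addr0. Qed.

Lemma posS d (z : pt d) a s k : pos z (a :: s) k.+1 = pos (nbr z a) s k.
Proof. by apply: functional_extensionality => j; rewrite /pos /nbr /= big_cons addrA. Qed.

Lemma srw_E_cons d N (G : seq ('I_d * bool) -> R) :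
  srw_E N.+1 G = (\sum_a srw_E N (fun s => G (a :: s))) / (2 * d)%:R.
Proof.
rewrite /srw_E mulr_suml.
rewrite (reindex (fun p : ('I_d * bool) * N.-tuple ('I_d * bool) => [tuple of p.1 :: p.2])) /=.
  rewrite -(pair_bigA _ (fun a (s : N.-tuple _) => G (a :: s) / ((2 * d) ^ N.+1)%:R)) /=.
  apply: eq_bigr => a _; rewrite mulr_suml; apply: eq_bigr => s _.
  by rewrite expnS natrM invfM mulrA mulrAC.
exists (fun s : N.+1.-tuple _ => (thead s, [tuple of behead s])).
  by move=> [a s] _ /=; congr (_, _); apply: val_inj.
by move=> s _; rewrite [in RHS](tuple_eta s).
Qed.

Lemma ler_srw_E d N (G H : seq ('I_d * bool) -> R) :
  (forall s, G s <= H s) -> srw_E N G <= srw_E N H.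
Proof. by move=> le_GH; apply: ler_sum => s _; rewrite ler_wpM2r ?invr_ge0 ?ler0n. Qed.

Lemma lyapunov_bound d (W g : pt d -> R) : (forall y, 0 <= g y) ->
  (forall y, exp (W y) * stepE g y <= g y) ->
  forall N z, srw_E N (fun s => exp (\sum_(k < N) W (pos z s k)) * g (pos z s N)) <= g z.
Proof.
move=> g_ge0 g_super; elim=> [|N IH] z.
  rewrite /srw_E (eq_bigr (fun _ => g z)) => [|s _].
    by rewrite sumr_const card_tuple expn0.
  by rewrite big_ord0 expR0 mul1r pos0 expn0 divr1.
have first_step a :
  srw_E N (fun s => exp (\sum_(k < N.+1) W (pos z (a :: s) k)) * g (pos z (a :: s) N.+1))
  = exp (W z) * srw_E N (fun s => exp (\sum_(k < N) W (pos (nbr z a) s k))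
                                  * g (pos (nbr z a) s N)).
  rewrite /srw_E mulr_sumr; apply: eq_bigr => s _.
  rewrite big_ord_recl pos0 posS -expRD !mulrA; congr (_ * exp _ * _ / _).
  by apply: eq_bigr => k _; rewrite posS.
rewrite srw_E_cons (eq_bigr _ (fun a _ => first_step a)) -mulr_sumr -mulrA.
apply: le_trans (g_super z); apply: ler_wpM2l; first by apply/ltW/RltP; exact: exp_pos.
by apply: ler_wpM2r; rewrite ?invr_ge0 ?ler0n //; apply: ler_sum => a _; exact: IH.
Qed.

Lemma in_shell_U d L0 n (x : pt d) M i y : in_shell L0 n x M i y -> in_U L0 n x M i y.
Proof. by case: i => [|i] //= /andP []. Qed.

Lemma count_iotaE (P : pred nat) N : (count P (iota 0 N))%:R = \sum_(k < N) (P k)%:R :> R.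
Proof.
rewrite -sum1_count big_mkcond /= natr_sum -{1}(subn0 N) -/(index_iota 0 N) big_mkord.
by apply: eq_bigr => k _; case: (P k).
Qed.

(* [216 = 4 * 54] makes [4 * eps_of d * potential <= 1], by [potential_le]. *)
Definition eps_of (d : nat) : R := kappa d / (216 * tree_bound).

Lemma eps_of_gt0 d : 0 < eps_of d.
Proof. by rewrite divr_gt0 ?kappa_gt0 //; have := tree_bound_ge1; lra. Qed.

Section Occupation.

Variables (d L0 n : nat) (x : pt d) (M : seq bool -> pt d) (I : nat).
Hypotheses (d_ge3 : (3 <= d)%N) (L0_gt0 : (0 < L0)%N) (spacing : emb_spacing L0 n M).

Definition shell_weight (y : pt d) : R :=
  \sum_(i < I) (in_shell L0 n x M i y : nat)%:R / (Lk L0 i ^ 2 * 3 ^ i)%:R.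

(* The factor [36 = (L_(i+1) / L_i) ^ 2] converts the drift [kappa d / L_(i+1) ^ 2] of
   [shell_potential i] into the weight [1 / (L_i ^ 2 * 3 ^ i)] of the shell [S_i]. *)
Definition potential (y : pt d) : R :=
  \sum_(i < I) 36 / (kappa d * 3 ^+ i) * shell_potential L0 n x M i y.

Lemma potential_coef_ge0 i : 0 <= 36 / (kappa d * 3 ^+ i).
Proof. by rewrite divr_ge0 ?ler0n // mulr_ge0 ?exprn_ge0 ?ler0n // ltW // kappa_gt0. Qed.

Lemma potential_ge0 y : 0 <= potential y.
Proof.
by apply: sumr_ge0 => i _; rewrite mulr_ge0 ?shell_potential_ge0 ?potential_coef_ge0.
Qed.

Lemma potential_le y : potential y <= 54 * tree_bound / kappa d.
Proof.
have k_gt0 := kappa_gt0 d; have Kb_ge1 := tree_bound_ge1.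
apply: le_trans (_ : \sum_(i < I) 36 * tree_bound / kappa d * (3^-1) ^+ i <= _).
  apply: ler_sum => i _; rewrite exprVn.
  have -> : 36 * tree_bound / kappa d / 3 ^+ i = 36 / (kappa d * 3 ^+ i) * tree_bound.
    by field; rewrite lt0r_neq0 ?exprn_gt0 //; lra.
  by apply: ler_wpM2l; rewrite ?shell_potential_le ?potential_coef_ge0.
have coef_ge0 : 0 <= 36 * tree_bound / kappa d by apply: divr_ge0; [apply: mulr_ge0|]; lra.
have third : 0 <= (3^-1 : R) < 1 by apply/andP; split; lra.
rewrite -mulr_sumr; apply: le_trans (ler_wpM2l coef_ge0 (geometric_sum_le I third)) _.
by rewrite (_ : (1 - 3^-1)^-1 = 3/2 :> R); [rewrite -mulrA mulrCA; lra | field].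
Qed.

Lemma potential_drift y : shell_weight y <= potential y - stepE potential y.
Proof.
rewrite /potential stepE_sum -sumrB; apply: ler_sum => i _.
rewrite stepE_scale -mulrBr.
have k_gt0 := kappa_gt0 d; have L_ge1 := Lr_ge1 i L0_gt0.
have cf_ge0 := potential_coef_ge0 i.
case: (boolP (in_shell L0 n x M i y)) => [/in_shell_U in_Ui | _]; last first.
  by rewrite mul0r mulr_ge0 // subr_ge0 shell_potential_superharmonic.
apply: le_trans _ (ler_wpM2l cf_ge0 (shell_potential_drift d_ge3 L0_gt0 in_Ui)).
rewrite natrM !natrX -/(Lr _ _) LrS /=.
suff -> : 36 / (kappa d * 3 ^+ i) * (kappa d / (6 * Lr L0 i) ^+ 2) = 1 / (Lr L0 i ^+ 2 * 3 ^+ i).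
  by [].
by field; rewrite !lt0r_neq0 ?exprn_gt0 //; lra.
Qed.

Lemma shell_weight_ge0 y : 0 <= shell_weight y.
Proof. by apply: sumr_ge0 => i _; rewrite divr_ge0 ?ler0n. Qed.

Lemma trunc_functional_eq eps z N s :
  trunc_functional L0 n x M eps z N I s = exp (\sum_(k < N) eps * shell_weight (pos z s k)).
Proof.
rewrite /trunc_functional -mulr_sumr; congr (exp (eps * _)).
under eq_bigr do rewrite /tau count_iotaE mulr_suml.
by rewrite exchange_big.
Qed.

Lemma trunc_functional_le z N : srw_E N (trunc_functional L0 n x M (eps_of d) z N I) <= 2.
Proof.
have k_gt0 := kappa_gt0 d; have Kb_ge1 := tree_bound_ge1.
set eps := eps_of d; set B := 54 * tree_bound / kappa d.
have eps_gt0 : 0 < eps := eps_of_gt0 d.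
have epsB : 4 * eps * B = 1 by rewrite /eps /eps_of /B; field; rewrite !lt0r_neq0 //; lra.
have f_le y : 4 * eps * potential y <= 1.
  by rewrite -[leRHS]epsB; apply: ler_wpM2l; [lra | exact: potential_le].
pose g y := 1 + 4 * eps * potential y.
have g_ge1 y : 1 <= g y by rewrite lerDl mulr_ge0 ?potential_ge0 //; lra.
have g_step y : exp (eps * shell_weight y) * stepE g y <= g y.
  rewrite /g stepE_affine ?(leq_trans _ d_ge3) //.
  have := potential_drift y; have := shell_weight_ge0 y; have := f_le y.
  have := stepE_ge0 y potential_ge0; have := potential_ge0 y.
  move: (potential y) (stepE _ y) (shell_weight y) => f Pf V f_ge0 Pf_ge0 f_le1 V_ge0 drift.
  apply: exp_drift_le; first (apply/andP; split).
  - exact: mulr_ge0 (ltW eps_gt0) V_ge0.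
  - by have := ler_wpM2l (ltW eps_gt0) drift; nra.
  - by rewrite mulr_ge0 //; lra.
  - by have := ler_wpM2l (ltW eps_gt0) drift; nra.
  - exact: f_le1.
apply: (@le_trans _ _ (g z)); last by rewrite /g; have := f_le z; lra.
apply: le_trans _ (lyapunov_bound (fun y => le_trans ler01 (g_ge1 y)) g_step N z).
apply: ler_srw_E => s; rewrite trunc_functional_eq ler_peMr //.
by apply/ltW/RltP; exact: exp_pos.
Qed.

End Occupation.

Local Close Scope ring_scope.

Theorem lemma5p5 (d : nat) (hd : 3 <= d) :
  exists eps : R, (0 < eps)%R /\
    forall (L0 n : nat) (x : pt d) (M : seq bool -> pt d),
      0 < L0 -> 0 < n -> in_lat L0 n x -> in_F x -> in_LambdaF L0 n x M ->
      exists C : R, forall (z : pt d) (N I : nat),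
        (srw_E N (trunc_functional L0 n x M eps z N I) <= C)%R.
Proof.
exists (eps_of d); split; first exact: eps_of_gt0.
move=> L0 n x M L0_gt0 _ _ _ [[_ [_ spacing]] _].
by exists 2%R => z N I; apply: trunc_functional_le.
Qed.
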